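(* Let $\varrho$ be a four-qubit state on parties $A,B,C,D$ that can be prepared in the square network. Then $$\langle X_BX_D\rangle_\varrho^2+\langle Z_BX_CZ_D\rangle_\varrho^2+\langle X_AY_BY_D\rangle_\varrho^2\le 1 \quad\text{and}\quad \langle X_AX_C\rangle_\varrho^2+\langle Y_AY_BZ_CZ_D\rangle_\varrho^2\le 1.$$
   Context: $X,Y,Z$ are Pauli matrices acting on the indicated qubits (identity elsewhere), $\langle O\rangle_\varrho=\mathrm{Tr}(O\varrho)$. Square network: four bipartite sources (finite-dimensional, arbitrary dimension) shared by the pairs $AB$, $BC$, $CD$, $DA$. A state can be prepared in it if $\varrho=\sum_\lambda p_\lambda\,\mathcal E_A^{(\lambda)}\otimes\mathcal E_B^{(\lambda)}\otimes\mathcal E_C^{(\lambda)}\otimes\mathcal E_D^{(\lambda)}[\bigotimes_s\varrho_s]$, with a probability distribution $p_\lambda$, source states $\varrho_s$ and quantum channels $\mathcal E_X^{(\lambda)}$ mapping the two subsystems received by party $X$ to a qubit. *)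

(* Complex numbers C := R[i] over an arbitrary real closed field R
   (covers R = the real numbers).  Operators on a finite-dimensional Hilbert space
   with orthonormal basis indexed by a finite type T are represented as functions
   T -> T -> C (matrix entries); tensor products of spaces are products of index types. *)
From HB Require Import structures.
From mathcomp Require Import all_boot all_order all_algebra.
From mathcomp Require Import complex.
Set Implicit Arguments. Unset Strict Implicit. Unset Printing Implicit Defensive.
Import Order.TTheory GRing.Theory Num.Theory.
Local Open Scope ring_scope.
Local Open Scope type_scope.
Local Open Scope ring_scope.

Section QDefs.
Variable R : rcfType.
Local Notation C := (R[i]).

Definition op (T : finType) := T -> T -> C.

Definition trace (T : finType) (X : op T) : C := \sum_(x : T) X x x.

(* positive semidefinite: <v, X v> >= 0 for every vector v (this forces
   <v,Xv> to be real, hence X Hermitian) *)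
Definition psd (T : finType) (X : op T) : Prop :=
  forall v : T -> C, 0 <= \sum_(x : T) \sum_(y : T) (Num.conj (v x)) * X x y * v y.

Definition density (T : finType) (X : op T) : Prop := psd X /\ trace X = 1.

Definition eunit (T : finType) (x y : T) : op T :=
  fun a b => if (a == x) && (b == y) then 1 else 0.

Definition linear_map (T U : finType) (E : op T -> op U) : Prop :=
  forall (a : C) (X Y : op T),
    E (fun x y => a * X x y + Y x y) = (fun u v => a * E X u v + E Y u v).

(* (id_K (x) E) applied to an operator on K (x) T *)
Definition ampl (K T U : finType) (E : op T -> op U) (X : op (K * T)%type) : op (K * U)%type :=
  fun ku lv => E (fun x y => X (ku.1, x) (lv.1, y)) ku.2 lv.2.

Definition channel (T U : finType) (E : op T -> op U) : Prop :=
  [/\ linear_map E,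
      (forall X : op T, trace (E X) = trace X) &
      (forall (K : finType) (X : op (K * T)%type), psd X -> psd (ampl E X))].

(* the tensor product E1 (x) E2 (x) E3 (x) E4 of linear maps, defined through
   its (linear) action on matrix units *)
Definition tens4 (T1 T2 T3 T4 U1 U2 U3 U4 : finType)
  (E1 : op T1 -> op U1) (E2 : op T2 -> op U2)
  (E3 : op T3 -> op U3) (E4 : op T4 -> op U4)
  (X : op (T1 * T2 * T3 * T4)%type) : op (U1 * U2 * U3 * U4)%type :=
  fun u v =>
    \sum_(x : T1 * T2 * T3 * T4) \sum_(y : T1 * T2 * T3 * T4)
      X x y * (E1 (eunit x.1.1.1 y.1.1.1) u.1.1.1 v.1.1.1
             * E2 (eunit x.1.1.2 y.1.1.2) u.1.1.2 v.1.1.2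
             * E3 (eunit x.1.2 y.1.2) u.1.2 v.1.2
             * E4 (eunit x.2 y.2) u.2 v.2).

(* qubit: basis indexed by bool (false = |0>, true = |1>) *)
Definition qubit := bool.

Definition PauliX : op qubit := fun a b => if a != b then 1 else 0.
Definition PauliY : op qubit :=
  fun a b => if a == b then 0 else if b then - Complex 0 1 else Complex 0 1.
Definition PauliZ : op qubit :=
  fun a b => if a == b then (if a then -1 else 1) else 0.
Definition Id2 : op qubit := fun a b => if a == b then 1 else 0.

(* four-qubit operator P_A (x) P_B (x) P_C (x) P_D, parties ordered A,B,C,D *)
Definition pauli4 (PA PB PC PD : op qubit) : op (qubit * qubit * qubit * qubit)%type :=
  fun x y => PA x.1.1.1 y.1.1.1 * PB x.1.1.2 y.1.1.2 * PC x.1.2 y.1.2 * PD x.2 y.2.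

Definition expect (T : finType) (O rho : op T) : C :=
  \sum_(x : T) \sum_(y : T) O x y * rho y x.

(* Source AB emits systems a1 (to A) and b1 (to B),
   source BC emits b2 (to B) and c1 (to C), source CD emits c2 (to C) and d1 (to D),
   source DA emits d2 (to D) and a2 (to A).  The joint state of the four
   sources, with subsystems regrouped by receiving party
   ((a1,a2),(b1,b2),(c1,c2),(d1,d2)). *)
Definition square_sources
  (A1 A2 B1 B2 C1 C2 D1 D2 : finType)
  (rAB : op (A1 * B1)%type) (rBC : op (B2 * C1)%type) (rCD : op (C2 * D1)%type) (rDA : op (D2 * A2)%type)
  : op ((A1 * A2) * (B1 * B2) * (C1 * C2) * (D1 * D2))%type :=
  fun x y =>
    rAB (x.1.1.1.1, x.1.1.2.1) (y.1.1.1.1, y.1.1.2.1)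
  * rBC (x.1.1.2.2, x.1.2.1) (y.1.1.2.2, y.1.2.1)
  * rCD (x.1.2.2, x.2.1) (y.1.2.2, y.2.1)
  * rDA (x.2.2, x.1.1.1.2) (y.2.2, y.1.1.1.2).

Definition square_network_state (rho : op (qubit * qubit * qubit * qubit)%type) : Prop :=
  exists (A1 A2 B1 B2 C1 C2 D1 D2 : finType)
         (rAB : op (A1 * B1)%type) (rBC : op (B2 * C1)%type)
         (rCD : op (C2 * D1)%type) (rDA : op (D2 * A2)%type)
         (L : finType) (p : L -> R)
         (EA : L -> op (A1 * A2)%type -> op qubit) (EB : L -> op (B1 * B2)%type -> op qubit)
         (EC : L -> op (C1 * C2)%type -> op qubit) (ED : L -> op (D1 * D2)%type -> op qubit),
    [/\ [/\ density rAB, density rBC, density rCD & density rDA],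
        (forall l, 0 <= p l) /\ \sum_(l : L) p l = 1,
        (forall l, [/\ channel (EA l), channel (EB l), channel (EC l) & channel (ED l)]) &
        rho = (fun x y => \sum_(l : L) Complex (p l) 0 *
                 tens4 (EA l) (EB l) (EC l) (ED l)
                   (square_sources rAB rBC rCD rDA) x y)].

End QDefs.

From Pilot Require Import Defs.
From HB Require Import structures.
From mathcomp Require Import all_boot all_order all_algebra.
From mathcomp Require Import complex.
From mathcomp Require Import ring.
From Stdlib Require Import FunctionalExtensionality.
Set Implicit Arguments. Unset Strict Implicit. Unset Printing Implicit Defensive.
Import Order.TTheory GRing.Theory Num.Theory.
Local Open Scope ring_scope.

(* Inflation.  In an inflated network every party receives either a genuine source
   output or a fresh copy of a single-system marginal of a source.  An identity
   observable traces its party out, so an observable acting only on parties whose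
   joint marginal coincides with a marginal of the square network has the same
   expectation as the corresponding observable on [rho].  With three copies D, D', D''
   of party D (D keeps the CD source, D' the DA source, D'' gets only marginals) the
   correlators [X_B X_D], [Z_B X_C Z_D], [X_A Y_B Y_D] become [X_B X_D''], [Z_B X_C Z_D],
   [X_A Y_B Y_D'], which pairwise anticommute (at B only); with an extra copy C' of C
   made of marginals, [X_A X_C] and [Y_A Y_B Z_C Z_D] become [X_A X_C'] and
   [Y_A Y_B Z_C Z_D], which anticommute at A.  Finally, for pairwise anticommuting
   Hermitian involutions [O_i], the observable [B = sum_i <O_i> O_i] squares to [S]
   with [S = sum_i <O_i>^2], so [0 <= <(B - S)^2> = S - S^2] and [S <= 1]. *)

Section Operators.
Variable R : rcfType.
Local Notation C := (R[i]).
Local Notation op := (Defs.op R).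
Local Notation eunit := (Defs.eunit R).

Lemma sum_pair (T U : finType) (F : T * U -> C) :
  \sum_(x : T * U) F x = \sum_(a : T) \sum_(b : U) F (a, b).
Proof. by rewrite pair_big; apply: eq_bigr => -[]. Qed.

Lemma sum_mul_sep (U V : finType) (F : U -> V -> C) (K cf cg : C) (f : U -> C) (g : V -> C) :
  (forall u v, F u v = K * f u * g v) -> \sum_(u : U) f u = cf -> \sum_(v : V) g v = cg ->
  \sum_(u : U) \sum_(v : V) F u v = K * cf * cg.
Proof.
move=> FE <- <-; rewrite [K * _]big_distrr /= big_distrl; apply: eq_bigr => u _.
by rewrite /= big_distrr; apply: eq_bigr => v _; rewrite FE /=; ring.
Qed.

Definition idop {T : finType} : op T := fun x y => if x == y then 1 else 0.

Lemma idopC (T : finType) (x y : T) : idop x y = idop y x.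
Proof. by rewrite /idop eq_sym. Qed.

Lemma sum_idopr (T : finType) (F : T -> C) (x : T) :
  \sum_(y : T) F y * idop y x = F x.
Proof.
rewrite (bigD1 x) //= /idop eqxx mulr1 big1 ?addr0 // => y /negPf ->.
exact: mulr0.
Qed.

Lemma sum_idopl (T : finType) (F : T -> C) (x : T) :
  \sum_(y : T) F y * idop x y = F x.
Proof. by under eq_bigr do rewrite idopC; exact: sum_idopr. Qed.

Lemma conj_idop (T : finType) (x y : T) : Num.conj (idop x y) = idop x y.
Proof. by rewrite /idop; case: (x == y); rewrite ?rmorph1 ?rmorph0. Qed.

Lemma idop_pair (T U : finType) (x y : T * U) :
  idop x.1 y.1 * idop x.2 y.2 = idop x y.
Proof.
case: x y => [a b] [c d]; rewrite /idop /= xpair_eqE.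
by case: (a == c); case: (b == d); rewrite ?mulr1 ?mulr0.
Qed.

Lemma eunitE (T : finType) (x y a b : T) : eunit x y a b = idop a x * idop b y.
Proof. by rewrite /eunit /idop; case: (a == x); case: (b == y); rewrite ?mulr1 ?mulr0. Qed.

Lemma trace_eunit (T : finType) (x y : T) : trace (eunit x y) = idop x y.
Proof. by rewrite /trace; under eq_bigr do rewrite eunitE; rewrite sum_idopr idopC. Qed.

Lemma linear_map0 (T U : finType) (E : op T -> op U) :
  linear_map E -> E (fun _ _ => 0) = (fun _ _ => 0).
Proof.
move=> linE; have := linE 1 (fun _ _ => 0) (fun _ _ => 0).
have -> : (fun x y : T => (1 : C) * 0 + 0) = (fun _ _ => 0).
  by do 2!apply: functional_extensionality => ?; rewrite mulr0 addr0.
move=> E0; apply: functional_extensionality => u; apply: functional_extensionality => v.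
by have := congr1 (fun f => f u v) E0; rewrite /= mul1r -{1}[E _ u v]addr0 => /addrI <-.
Qed.

Lemma linear_map_sum (T U : finType) (E : op T -> op U) (I : Type) (s : seq I)
    (c : I -> C) (A : I -> op T) :
  linear_map E ->
  E (fun x y => \sum_(i <- s) c i * A i x y) =
  (fun u v => \sum_(i <- s) c i * E (A i) u v).
Proof.
move=> linE; elim: s => [|i s IH].
  rewrite (_ : (fun x y : T => \sum_(i <- [::]) c i * A i x y) = fun _ _ => 0).
    by rewrite linear_map0 //; do 2!apply: functional_extensionality => ?; rewrite big_nil.
  by do 2!apply: functional_extensionality => ?; rewrite big_nil.
rewrite (_ : (fun x y : T => \sum_(j <- i :: s) c j * A j x y) =
             (fun x y => c i * A i x y + \sum_(j <- s) c j * A j x y)).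
  rewrite linE IH; do 2!apply: functional_extensionality => ?; exact/esym/big_cons.
by do 2!apply: functional_extensionality => ?; rewrite big_cons.
Qed.

Lemma op_expand (T : finType) (M : op T) :
  M = (fun a b => \sum_(p : T * T) M p.1 p.2 * eunit p.1 p.2 a b).
Proof.
do 2!apply: functional_extensionality => ?; rewrite sum_pair.
under eq_bigr do under eq_bigr do rewrite eunitE mulrA.
by under eq_bigr do rewrite sum_idopl; rewrite sum_idopl.
Qed.

Lemma linear_map_expand (T U : finType) (E : op T -> op U) (M : op T) (u v : U) :
  linear_map E -> E M u v = \sum_(x : T) \sum_(y : T) M x y * E (eunit x y) u v.
Proof.
move=> linE; rewrite {1}(op_expand M).
by rewrite (linear_map_sum _ (fun p => M p.1 p.2) (fun p => eunit p.1 p.2) linE) sum_pair.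
Qed.

End Operators.

Section Positivity.
Variable R : rcfType.
Local Notation C := (R[i]).
Local Notation op := (Defs.op R).
Local Notation idop := (idop R).

Definition qform (T : finType) (X : op T) (v : T -> C) : C :=
  \sum_(x : T) \sum_(y : T) Num.conj (v x) * X x y * v y.

Lemma real_conj (z : C) : 0 <= z -> Num.conj z = z.
Proof. by move/ger0_real/conj_Creal. Qed.

Lemma sum_reindex (T U : finType) (F : T -> C) (f : U -> T) (g : T -> U) :
  cancel f g -> cancel g f -> \sum_(a : T) F a = \sum_(x : U) F (f x).
Proof. by move=> fK gK; rewrite (reindex f) //; exists g => x _. Qed.

Definition relabel (T U : finType) (f : U -> T) (X : op T) : op U :=
  fun x y => X (f x) (f y).

Lemma psd_relabel (T U : finType) (X : op T) (f : U -> T) (g : T -> U) :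
  cancel f g -> cancel g f -> psd X -> psd (relabel f X).
Proof.
move=> fK gK psdX v; have := psdX (fun a => v (g a)).
rewrite (sum_reindex _ fK gK); under eq_bigr do rewrite (sum_reindex _ fK gK).
by under eq_bigr do under eq_bigr do rewrite !fK.
Qed.

Lemma qform_pair (T : finType) (X : op T) (s t : C) (x y : T) :
  qform X (fun a => s * idop a x + t * idop a y) =
  Num.conj s * s * X x x + Num.conj s * t * X x y
  + Num.conj t * s * X y x + Num.conj t * t * X y y.
Proof.
have pick2 (F : T -> C) (s' t' : C) :
    \sum_(b : T) F b * (s' * idop b x + t' * idop b y) = s' * F x + t' * F y.
  under eq_bigr do rewrite mulrDr ![F _ * (_ * _)]mulrCA.
  by rewrite big_split -!big_distrr /= !sum_idopr.
rewrite /qform.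
under eq_bigr do rewrite pick2 rmorphD !rmorphM /= !conj_idop.
transitivity (\sum_(a : T) (s * X a x + t * X a y) *
   (Num.conj s * idop a x + Num.conj t * idop a y)).
  by apply: eq_bigr => a _; ring.
by rewrite pick2; ring.
Qed.

Lemma psd_diag_ge0 (T : finType) (X : op T) (x : T) : psd X -> 0 <= X x x.
Proof.
move/(_ (fun a => 1 * idop a x + 0 * idop a x)).
by rewrite -/(qform _ _) qform_pair rmorph1 rmorph0 !(mul0r, mulr0, mul1r, addr0).
Qed.

Lemma psd_conj (T : finType) (X : op T) (x y : T) : psd X -> X y x = Num.conj (X x y).
Proof.
move=> psdX.
have rx := real_conj (psd_diag_ge0 x psdX); have ry := real_conj (psd_diag_ge0 y psdX).
have real_qform t : Num.conj (qform X (fun c => 1 * idop c x + t * idop c y)) =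
                    qform X (fun c => 1 * idop c x + t * idop c y).
  exact/real_conj/psdX.
have /eqP := real_qform 1; have /eqP := real_qform 'i.
rewrite !qform_pair !(rmorphD, rmorphM) /= !rmorph1 !conjCK conjCi rx ry.
rewrite -subr_eq0; set D2 := (X in X == 0) => /eqP D2_0.
rewrite -subr_eq0; set D1 := (X in X == 0) => /eqP D1_0.
(* [D1 = 0] and [D2 = 0] say that [X x y + X y x] and ['i * (X x y - X y x)] are real *)
have : 2 * (Num.conj (X x y) - X y x) =
       D1 + 'i * D2 + (1 + 'i ^+ 2) * (Num.conj (X x y) - Num.conj (X y x) + X x y - X y x).
  by rewrite /D1 /D2; ring.
rewrite D1_0 D2_0 sqr_i addrN mul0r mulr0 !addr0 => /eqP.
by rewrite mulf_eq0 pnatr_eq0 /= subr_eq0 => /eqP.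
Qed.

Lemma psd_diag0_row0 (T : finType) (X : op T) (x y : T) :
  psd X -> X x x = 0 -> X x y = 0.
Proof.
move=> psdX Xxx0; apply/eqP/negPn/negP => a0.
have ca0 : Num.conj (X x y) != 0 by rewrite conjC_eq0.
have ry := real_conj (psd_diag_ge0 y psdX).
pose s := - (X y y + 1) / (2 * Num.conj (X x y)).
have := psdX (fun c => s * idop c x + 1 * idop c y).
rewrite -/(qform _ _) qform_pair Xxx0 (psd_conj x y psdX) rmorph1.
have -> : Num.conj s = - (X y y + 1) / (2 * X x y).
  by rewrite /s !(rmorphM, rmorphN, rmorphD, rmorph1, fmorphV) /= ry conjCK.
rewrite [X in 0 <= X](_ : _ = -1) ?ler0N1 //.
by rewrite /s; field; rewrite /= ca0 a0.
Qed.
End Positivity.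

Section Gram.
Variable R : rcfType.
Local Notation C := (R[i]).
Local Notation op := (Defs.op R).
Local Notation idop := (idop R).

Lemma qform_shift (T : finType) (X : op T) (v : T -> C) (c : C) (x0 : T) :
  qform X (fun a => v a + c * idop a x0) =
  qform X v + c * (\sum_(a : T) Num.conj (v a) * X a x0)
  + Num.conj c * (\sum_(b : T) X x0 b * v b) + Num.conj c * c * X x0 x0.
Proof.
rewrite /qform.
transitivity (\sum_(a : T) (\sum_(b : T) Num.conj (v a) * X a b * v b
   + c * (Num.conj (v a) * X a x0)
   + (Num.conj c * \sum_(b : T) X a b * v b) * idop a x0
   + (Num.conj c * c * X a x0) * idop a x0)).
  apply: eq_bigr => a _; rewrite rmorphD rmorphM /= conj_idop.
  transitivity (\sum_(b : T) ((Num.conj (v a) * X a b * v b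
      + (Num.conj c * (X a b * v b)) * idop a x0)
      + (c * (Num.conj (v a) * X a b) + Num.conj c * c * X a b * idop a x0) * idop b x0)).
    by apply: eq_bigr => b _; ring.
  by rewrite big_split /= sum_idopr big_split /= -big_distrl /= -big_distrr /=; ring.
by rewrite !big_split /= !sum_idopr -big_distrr.
Qed.

Lemma psd_schur (T : finType) (Q : op T) (x0 : T) : psd Q -> 0 < Q x0 x0 ->
  psd (fun x y => Q x y - Q x x0 * Q x0 y / Q x0 x0).
Proof.
move=> psdQ Q00 v; rewrite -/(qform _ _).
have Q00r := real_conj (ltW Q00); have Q00n : Q x0 x0 != 0 by rewrite gt_eqF.
set c := \sum_(b : T) Q x0 b * v b; set d := \sum_(a : T) Num.conj (v a) * Q a x0.
have -> : qform (fun x y => Q x y - Q x x0 * Q x0 y / Q x0 x0) v =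
          qform Q v - d * c / Q x0 x0.
  rewrite /qform /d /c !big_distrl /= -sumrB; apply: eq_bigr => a _.
  rewrite big_distrr !big_distrl /= -sumrB; apply: eq_bigr => b _; ring.
(* completing the square: shift [v] along [x0] *)
have -> : qform Q v - d * c / Q x0 x0 = qform Q (fun a => v a + (- c / Q x0 x0) * idop a x0).
  by rewrite qform_shift -/c -/d rmorphM fmorphV /= Q00r rmorphN /=; field.
exact: psdQ.
Qed.

Lemma psd_gram (T : finType) (Q : op T) : psd Q ->
  exists us : seq (T -> C), forall x y, Q x y = \sum_(u <- us) u x * Num.conj (u y).
Proof.
suff gram_on (s : seq T) (P : op T) : psd P -> (forall x, x \notin s -> P x x = 0) ->
    exists us : seq (T -> C), forall x y, P x y = \sum_(u <- us) u x * Num.conj (u y).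
  by move=> psdQ; apply: (gram_on (enum T)) => // x; rewrite mem_enum.
elim: s P => [|x0 s IH] P psdP P0.
  by exists [::] => x y; rewrite big_nil; apply: psd_diag0_row0 (P0 x _).
have [Px0|Px0] := eqVneq (P x0 x0) 0.
  apply: IH => // x xs; have [-> //|nx] := eqVneq x x0.
  by apply: P0; rewrite inE negb_or nx.
have P00 : 0 < P x0 x0 by rewrite lt0r Px0 psd_diag_ge0.
pose r := sqrtC (P x0 x0); pose u x := P x x0 / r.
have uu x y : u x * Num.conj (u y) = P x x0 * P x0 y / P x0 x0.
  have r2 : r ^+ 2 = P x0 x0 := sqrtCK _.
  have r_ge0 : 0 <= r by rewrite sqrtC_ge0 ltW.
  rewrite /u rmorphM fmorphV /= (real_conj r_ge0).
  rewrite (psd_conj x0 y psdP) conjCK -r2; field.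
  by rewrite /r sqrtC_eq0.
have [|us Pus] := IH _ (psd_schur psdP P00).
  move=> x xs; have [->|nx] := eqVneq x x0; first by field.
  have Pxx : P x x = 0 by apply: P0; rewrite inE negb_or nx.
  by rewrite Pxx (psd_diag0_row0 x0 psdP Pxx) !mul0r subr0.
by exists (u :: us) => x y; rewrite big_cons -Pus uu; ring.
Qed.

Definition otens (T U : finType) (P : op T) (Q : op U) : op (T * U)%type :=
  fun x y => P x.1 y.1 * Q x.2 y.2.

Lemma psd_otens (T U : finType) (P : op T) (Q : op U) :
  psd P -> psd Q -> psd (otens P Q).
Proof.
move=> psdP psdQ v; case: (psd_gram psdQ) => us Qus; rewrite -/(qform _ _).
have -> : qform (otens P Q) v =
    \sum_(u <- us) qform P (fun a => \sum_(b : U) Num.conj (u b) * v (a, b)).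
  rewrite /qform /otens.
  under eq_bigr do under eq_bigr do
    rewrite Qus big_distrr /= big_distrr /= big_distrl /=.
  under eq_bigr do rewrite exchange_big.
  rewrite exchange_big; apply: eq_bigr => u _.
  rewrite sum_pair; apply: eq_bigr => a _.
  under eq_bigr do rewrite sum_pair.
  rewrite exchange_big; apply: eq_bigr => a' _.
  rewrite rmorph_sum /= !big_distrl /=; apply: eq_bigr => b _.
  rewrite big_distrr /=; apply: eq_bigr => b' _.
  by rewrite rmorphM /= conjCK; ring.
by apply: sumr_ge0 => u _; apply: psdP.
Qed.

End Gram.

Section PartialTrace.
Variable R : rcfType.
Local Notation op := (Defs.op R).
Local Notation idop := (idop R).

Definition ptr1 (T U : finType) (X : op (T * U)%type) : op U :=
  fun a b => \sum_(p : T) X (p, a) (p, b).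
Definition ptr2 (T U : finType) (X : op (T * U)%type) : op T :=
  fun a b => \sum_(p : U) X (a, p) (b, p).

Lemma trace_ptr1 (T U : finType) (X : op (T * U)%type) : trace (ptr1 X) = trace X.
Proof. by rewrite /trace /ptr1 sum_pair exchange_big. Qed.

Lemma trace_ptr2 (T U : finType) (X : op (T * U)%type) : trace (ptr2 X) = trace X.
Proof. by rewrite /trace /ptr2 sum_pair. Qed.

Lemma trace_otens (T U : finType) (P : op T) (Q : op U) :
  trace (otens P Q) = trace P * trace Q.
Proof. by rewrite /trace /otens sum_pair big_distrl; apply: eq_bigr => a _; rewrite big_distrr. Qed.

Lemma trace_relabel (T U : finType) (X : op T) (f : U -> T) (g : T -> U) :
  cancel f g -> cancel g f -> trace (relabel f X) = trace X.
Proof. by move=> fK gK; rewrite /trace (sum_reindex _ fK gK). Qed.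

Lemma ptr1_otens (T U : finType) (P : op T) (Q : op U) : trace P = 1 -> ptr1 (otens P Q) = Q.
Proof.
move=> trP; do 2!apply: functional_extensionality => ?.
by rewrite /ptr1 /otens /= -big_distrl /= -/(trace P) trP mul1r.
Qed.

Lemma ptr2_otens (T U : finType) (P : op T) (Q : op U) : trace Q = 1 -> ptr2 (otens P Q) = P.
Proof.
move=> trQ; do 2!apply: functional_extensionality => ?.
by rewrite /ptr2 /otens /= -big_distrr /= -/(trace Q) trQ mulr1.
Qed.

Lemma psd_ptr2 (T U : finType) (X : op (T * U)%type) : psd X -> psd (ptr2 X).
Proof.
move=> psdX v; rewrite -/(qform _ _).
have slice p : qform X (fun z => v z.1 * idop z.2 p) =
               \sum_(a : T) \sum_(a' : T) Num.conj (v a) * X (a, p) (a', p) * v a'.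
  transitivity (\sum_(a : T) \sum_(b : U) \sum_(a' : T) \sum_(b' : U)
      ((Num.conj (v a) * X (a, b) (a', b') * v a') * idop b p) * idop b' p).
    rewrite /qform sum_pair; apply: eq_bigr => a _; apply: eq_bigr => b _.
    rewrite sum_pair; apply: eq_bigr => a' _; apply: eq_bigr => b' _.
    by rewrite /= rmorphM /= conj_idop; ring.
  under eq_bigr do under eq_bigr do under eq_bigr do rewrite sum_idopr.
  by under eq_bigr do rewrite exchange_big; under eq_bigr do under eq_bigr do rewrite sum_idopr.
have -> : qform (ptr2 X) v = \sum_(p : U) qform X (fun z => v z.1 * idop z.2 p).
  under [RHS]eq_bigr do rewrite slice.
  rewrite /qform /ptr2 [RHS]exchange_big; apply: eq_bigr => a _.
  by rewrite [RHS]exchange_big; apply: eq_bigr => a' _; rewrite big_distrr big_distrl.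
by apply: sumr_ge0 => p _; apply: psdX.
Qed.

Lemma psd_ptr1 (T U : finType) (X : op (T * U)%type) : psd X -> psd (ptr1 X).
Proof.
move=> psdX; apply: (psd_ptr2 (X := relabel (fun z : U * T => (z.2, z.1)) X)).
by apply: (psd_relabel (g := fun z => (z.2, z.1))) => // -[].
Qed.

End PartialTrace.

Section Channels.
Variable R : rcfType.
Local Notation C := (R[i]).
Local Notation op := (Defs.op R).
Local Notation idop := (idop R).
Local Notation eunit := (Defs.eunit R).

Definition contract (T : finType) (X g : op T) : C := \sum_(x : T) \sum_(y : T) X x y * g x y.

Lemma contract_eunit (T : finType) (x y : T) (g : op T) : contract (eunit x y) g = g x y.
Proof.
rewrite /contract.
transitivity (\sum_(a : T) \sum_(b : T) (g a b * idop b y) * idop a x).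
  by apply: eq_bigr => a _; apply: eq_bigr => b _; rewrite eunitE; ring.
by under eq_bigr do rewrite -big_distrl /= sum_idopr; rewrite sum_idopr.
Qed.

Definition tens2 (T1 T2 U1 U2 : finType) (E : op T1 -> op U1) (F : op T2 -> op U2)
    (X : op (T1 * T2)%type) : op (U1 * U2)%type :=
  fun u v => contract X (fun x y => E (eunit x.1 y.1) u.1 v.1 * F (eunit x.2 y.2) u.2 v.2).

Lemma tens4_tens2 (T1 T2 T3 T4 U1 U2 U3 U4 : finType)
    (E1 : op T1 -> op U1) (E2 : op T2 -> op U2)
    (E3 : op T3 -> op U3) (E4 : op T4 -> op U4) (X : op (T1 * T2 * T3 * T4)%type) :
  tens4 E1 E2 E3 E4 X = tens2 (tens2 (tens2 E1 E2) E3) E4 X.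
Proof.
do 2!apply: functional_extensionality => ?.
rewrite /tens4 /tens2 {1}/contract; apply: eq_bigr => x _; apply: eq_bigr => y _.
by rewrite !contract_eunit.
Qed.

Lemma linear_tens2 (T1 T2 U1 U2 : finType) (E : op T1 -> op U1) (F : op T2 -> op U2) :
  linear_map (tens2 E F).
Proof.
move=> a X Y; do 2!apply: functional_extensionality => ?.
rewrite /tens2 /contract big_distrr /= -big_split /=; apply: eq_bigr => x _.
by rewrite big_distrr /= -big_split /=; apply: eq_bigr => y _; ring.
Qed.

Lemma trace_tens2 (T1 T2 U1 U2 : finType) (E : op T1 -> op U1) (F : op T2 -> op U2)
    (X : op (T1 * T2)%type) :
  (forall M, trace (E M) = trace M) -> (forall M, trace (F M) = trace M) ->
  trace (tens2 E F X) = trace X.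
Proof.
move=> trE trF; rewrite /trace /tens2 /contract exchange_big /=.
apply: eq_bigr => x _; rewrite exchange_big /=.
under eq_bigr do rewrite -mulr_sumr.
have trEF y : \sum_(u : U1 * U2) E (eunit x.1 y.1) u.1 u.1 * F (eunit x.2 y.2) u.2 u.2 = idop x y.
  rewrite sum_pair /=; under eq_bigr do rewrite -big_distrr /=.
  rewrite -big_distrl /= -!/(trace _) trE trF !trace_eunit; exact: idop_pair.
by under eq_bigr do rewrite trEF; exact: sum_idopl.
Qed.

Lemma channel_psd (T U : finType) (E : op T -> op U) (X : op T) :
  channel E -> psd X -> psd (E X).
Proof.
case=> _ _ cpE psdX.
have psdX1 : psd (relabel (@snd unit T) X) by apply: (psd_relabel (g := pair tt)) => [[[] ?]||].
apply: (psd_relabel (f := pair tt) (g := snd) _ _ (cpE _ _ psdX1)) => [//|[[] ?] //].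
Qed.

Lemma ampl_tens2 (K T1 T2 U1 U2 : finType) (E : op T1 -> op U1) (F : op T2 -> op U2)
    (X : op (K * (T1 * T2))%type) :
  linear_map E -> linear_map F ->
  ampl (tens2 E F) X =
  relabel (fun x : K * (U1 * U2) => (x.1, x.2.2, x.2.1))
    (ampl E (relabel (fun x : K * U2 * T1 => (x.1.1, x.2, x.1.2))
      (ampl F (relabel (fun x : K * T1 * T2 => (x.1.1, (x.1.2, x.2))) X)))).
Proof.
move=> linE linF; apply: functional_extensionality => -[k [u1 u2]].
apply: functional_extensionality => -[k' [v1 v2]].
rewrite /ampl /relabel /= (linear_map_expand _ _ _ linE).
under [RHS]eq_bigr do under eq_bigr do
  rewrite (linear_map_expand _ _ _ linF) /= big_distrl /=.
rewrite /tens2 /contract sum_pair; apply: eq_bigr => t1 _.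
rewrite exchange_big sum_pair; apply: eq_bigr => t1' _.
rewrite exchange_big.
by apply: eq_bigr => t2 _; rewrite big_distrl /=; apply: eq_bigr => t2' _; ring.
Qed.

Lemma channel_tens2 (T1 T2 U1 U2 : finType) (E : op T1 -> op U1) (F : op T2 -> op U2) :
  channel E -> channel F -> channel (tens2 E F).
Proof.
move=> [linE trE cpE] [linF trF cpF]; split.
- exact: linear_tens2.
- by move=> X; apply: trace_tens2.
move=> K X psdX; rewrite ampl_tens2 //.
apply: (psd_relabel (g := fun z => (z.1.1, (z.2, z.1.2)))) => [[? []]|[[]]|] //.
apply: cpE; apply: (psd_relabel (g := fun z => (z.1.1, z.2, z.1.2))) => [[[]]|[[]]|] //.
apply: cpF; apply: (psd_relabel (g := fun z => (z.1, z.2.1, z.2.2))) => [[[]]|[? []]|] //.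
Qed.

End Channels.

Section Mixtures.
Variable R : rcfType.
Local Notation op := (Defs.op R).

Definition mixture (T L : finType) (p : L -> R) (M : L -> op T) : op T :=
  fun x y => \sum_(l : L) Complex (p l) 0 * M l x y.

Lemma psd_mixture (T L : finType) (p : L -> R) (M : L -> op T) :
  (forall l, 0 <= p l) -> (forall l, psd (M l)) -> psd (mixture p M).
Proof.
move=> p_ge0 psdM v; rewrite -/(qform _ _).
have -> : qform (mixture p M) v = \sum_(l : L) Complex (p l) 0 * qform (M l) v.
  rewrite /qform /mixture.
  under eq_bigr do under eq_bigr do rewrite big_distrr /= big_distrl /=.
  under eq_bigr do rewrite exchange_big.
  rewrite exchange_big; apply: eq_bigr => l _.
  rewrite big_distrr; apply: eq_bigr => a _.
  by rewrite big_distrr; apply: eq_bigr => b _; rewrite /=; ring.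
apply: sumr_ge0 => l _; apply: mulr_ge0; last exact: psdM.
by rewrite lecE /= eqxx p_ge0.
Qed.

Lemma trace_mixture (T L : finType) (p : L -> R) (M : L -> op T) :
  \sum_(l : L) p l = 1 -> (forall l, trace (M l) = 1) -> trace (mixture p M) = 1.
Proof.
move=> p_sum trM; rewrite /trace /mixture exchange_big.
under eq_bigr do rewrite -big_distrr /= -/(trace (M _)) trM mulr1.
rewrite -(big_morph (fun r : R => Complex r 0) (id2 := 0) (op2 := +%R) (id1 := 0) (op1 := +%R)) ?p_sum //.
by move=> r s; apply/eqP; rewrite eq_complex /= addr0 !eqxx.
Qed.

Lemma expect_mixture (T L : finType) (O : op T) (p : L -> R) (M : L -> op T) :
  expect O (mixture p M) = \sum_(l : L) Complex (p l) 0 * expect O (M l).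
Proof.
rewrite /expect /mixture.
under eq_bigr do under eq_bigr do rewrite big_distrr /=.
under eq_bigr do rewrite exchange_big.
rewrite exchange_big; apply: eq_bigr => l _.
rewrite big_distrr; apply: eq_bigr => a _.
by rewrite big_distrr; apply: eq_bigr => b _; rewrite /=; ring.
Qed.

Lemma density_mixture (T U L : finType) (p : L -> R) (F : L -> op T -> op U) (X : op T) :
  (forall l, 0 <= p l) -> \sum_(l : L) p l = 1 -> (forall l, channel (F l)) ->
  density X -> density (mixture p (fun l => F l X)).
Proof.
move=> p_ge0 p_sum chF [psdX trX]; split.
  by apply: psd_mixture => // l; apply: channel_psd.
by apply: trace_mixture => // l; case: (chF l) => _ -> _.
Qed.

End Mixtures.

Section Contraction.
Variable R : rcfType.
Local Notation op := (Defs.op R).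
Local Notation idop := (idop R).
Local Notation eunit := (Defs.eunit R).

(* The Heisenberg-picture observable [E^*(O)], transposed: for linear [E],
   [expect O (E X) = contract X (heis O E)]. *)
Definition heis (T U : finType) (O : op U) (E : op T -> op U) : op T :=
  fun x y => expect O (E (eunit x y)).

Definition assoc_op (T1 T2 T3 : finType) (X : op (T1 * T2 * T3)%type) :
    op (T1 * (T2 * T3))%type :=
  relabel (fun x : T1 * (T2 * T3) => (x.1, x.2.1, x.2.2)) X.

Definition ptrm (T1 T2 T3 : finType) (X : op (T1 * (T2 * T3))%type) : op (T1 * T3)%type :=
  fun x y => \sum_(p : T2) X (x.1, (p, x.2)) (y.1, (p, y.2)).

Lemma contract_idop (T : finType) (X : op T) : contract X idop = trace X.
Proof. by rewrite /contract /trace; apply: eq_bigr => x _; rewrite sum_idopl. Qed.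

Lemma contract_slice (T U : finType) (X : op (T * U)%type) (g1 : op T) (g2 : op U) :
  contract X (otens g1 g2) =
  \sum_(a : T) \sum_(c : T) g1 a c * contract (fun b d => X (a, b) (c, d)) g2.
Proof.
rewrite /contract sum_pair; apply: eq_bigr => a _.
under eq_bigr do rewrite sum_pair.
rewrite exchange_big; apply: eq_bigr => c _; rewrite big_distrr; apply: eq_bigr => b _.
by rewrite big_distrr; apply: eq_bigr => d _; rewrite /otens /=; ring.
Qed.

Lemma contract_otens (T U : finType) (X1 g1 : op T) (X2 g2 : op U) :
  contract (otens X1 X2) (otens g1 g2) = contract X1 g1 * contract X2 g2.
Proof.
rewrite contract_slice [in RHS]/contract big_distrl; apply: eq_bigr => a _.
rewrite big_distrl; apply: eq_bigr => c _ /=.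
have -> : contract (fun b d => otens X1 X2 (a, b) (c, d)) g2 = X1 a c * contract X2 g2.
  rewrite /contract big_distrr; apply: eq_bigr => b _.
  by rewrite big_distrr; apply: eq_bigr => d _; rewrite /otens /=; ring.
by rewrite -/(contract X2 g2); ring.
Qed.

Lemma contract_relabel (T U : finType) (X g : op T) (f : U -> T) (f' : T -> U) :
  cancel f f' -> cancel f' f -> contract (relabel f X) (relabel f g) = contract X g.
Proof.
move=> fK f'K; rewrite /contract (sum_reindex _ fK f'K); apply: eq_bigr => x _.
by rewrite (sum_reindex _ fK f'K).
Qed.

Lemma contract_idr (T U : finType) (X : op (T * U)%type) (g : op T) :
  contract X (otens g idop) = contract (ptr2 X) g.
Proof.
rewrite contract_slice; apply: eq_bigr => a _; apply: eq_bigr => c _.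
by rewrite contract_idop mulrC.
Qed.

Lemma contract_idl (T U : finType) (X : op (T * U)%type) (g : op U) :
  contract X (otens idop g) = contract (ptr1 X) g.
Proof.
rewrite -(contract_relabel X _ (f := fun z : U * T => (z.2, z.1)) (f' := fun z => (z.2, z.1)));
  try by case.
rewrite (_ : relabel _ (otens idop g) = otens g idop); first exact: contract_idr.
by do 2!apply: functional_extensionality => ?; rewrite /relabel /otens mulrC.
Qed.

Lemma contract_assoc (T1 T2 T3 : finType) (X : op (T1 * T2 * T3)%type)
    (g1 : op T1) (g2 : op T2) (g3 : op T3) :
  contract X (otens (otens g1 g2) g3) = contract (assoc_op X) (otens g1 (otens g2 g3)).
Proof.
rewrite -(contract_relabel X _ (f := fun x : T1 * (T2 * T3) => (x.1, x.2.1, x.2.2))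
                               (f' := fun x => (x.1.1, (x.1.2, x.2))));
  [congr contract | by case=> ? [] | by case=> [[]]].
by do 2!apply: functional_extensionality => ?; rewrite /relabel /otens mulrA.
Qed.

Lemma contract_idm (T1 T2 T3 : finType) (X : op (T1 * (T2 * T3))%type)
    (g1 : op T1) (g3 : op T3) :
  contract X (otens g1 (otens idop g3)) = contract (ptrm X) (otens g1 g3).
Proof.
by rewrite !contract_slice; apply: eq_bigr => a _; apply: eq_bigr => c _; rewrite contract_idl.
Qed.

Lemma expect_tens2 (T1 T2 U1 U2 : finType) (E : op T1 -> op U1) (F : op T2 -> op U2)
    (O1 : op U1) (O2 : op U2) (X : op (T1 * T2)%type) :
  expect (otens O1 O2) (tens2 E F X) = contract X (otens (heis O1 E) (heis O2 F)).
Proof.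
have expect_contract (T : finType) (O M : op T) :
    expect O M = contract (fun x y => O x y * M y x) (fun _ _ => 1).
  by rewrite /expect /contract; apply: eq_bigr => x _; apply: eq_bigr => y _; rewrite mulr1.
rewrite /expect /tens2 /contract.
under eq_bigr do under eq_bigr do rewrite big_distrr /=.
under eq_bigr do rewrite exchange_big.
rewrite exchange_big; apply: eq_bigr => x _.
under eq_bigr do under eq_bigr do rewrite big_distrr /=.
under eq_bigr do rewrite exchange_big.
rewrite exchange_big; apply: eq_bigr => y _.
set M1 := E (eunit x.1 y.1); set M2 := F (eunit x.2 y.2); pose one (T : finType) : op T := fun _ _ => 1.
have -> : otens (heis O1 E) (heis O2 F) x y =
    contract (otens (fun a b => O1 a b * M1 b a) (fun a b => O2 a b * M2 b a)) (otens (one U1) (one U2)).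
  by rewrite contract_otens -!expect_contract.
rewrite /contract big_distrr; apply: eq_bigr => u _.
by rewrite big_distrr; apply: eq_bigr => v _; rewrite /otens /one /=; ring.
Qed.

Lemma heis_tens2 (T1 T2 U1 U2 : finType) (E : op T1 -> op U1) (F : op T2 -> op U2)
    (O1 : op U1) (O2 : op U2) :
  heis (otens O1 O2) (tens2 E F) = otens (heis O1 E) (heis O2 F).
Proof.
do 2!apply: functional_extensionality => ?.
by rewrite {1}/heis expect_tens2 contract_eunit.
Qed.

Lemma expect_idop (T : finType) (M : op T) : expect idop M = trace M.
Proof.
rewrite /expect /trace; apply: eq_bigr => a _.
by under eq_bigr do rewrite mulrC; rewrite sum_idopl.
Qed.

Lemma heis_idop (T U : finType) (E : op T -> op U) : channel E -> heis idop E = idop.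
Proof.
case=> _ trE _; do 2!apply: functional_extensionality => ?.
by rewrite /heis expect_idop trE trace_eunit.
Qed.

End Contraction.

Section CliffordBound.
Variable R : rcfType.
Local Notation C := (R[i]).
Local Notation op := (Defs.op R).
Local Notation idop := (idop R).

Definition mulop (T : finType) (P Q : op T) : op T := fun x y => \sum_(z : T) P x z * Q z y.

Definition herm (T : finType) (O : op T) := forall x y, Num.conj (O x y) = O y x.

Definition anticommute (T : finType) (P Q : op T) := forall x y, mulop P Q x y = - mulop Q P x y.

Lemma expect_real (T : finType) (tau O : op T) :
  psd tau -> herm O -> Num.conj (expect O tau) = expect O tau.
Proof.
move=> psd_tau hO; rewrite /expect rmorph_sum exchange_big; apply: eq_bigr => a _.
rewrite rmorph_sum; apply: eq_bigr => b _.
by rewrite rmorphM /= hO -(psd_conj _ _ psd_tau).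
Qed.

Lemma expect_sqr_ge0 (T : finType) (tau A : op T) :
  psd tau -> herm A -> 0 <= expect (mulop A A) tau.
Proof.
move=> psd_tau hA.
have -> : expect (mulop A A) tau = \sum_(z : T) qform tau (fun a => A a z).
  rewrite /expect /mulop /qform exchange_big [RHS]exchange_big; apply: eq_bigr => a _.
  rewrite [RHS]exchange_big; apply: eq_bigr => b _.
  by rewrite big_distrl; apply: eq_bigr => z _; rewrite /= hA; ring.
by apply: sumr_ge0 => z _; apply: psd_tau.
Qed.

Lemma expect_lin (T : finType) (P Q M : op T) (a b : C) :
  expect (fun x y => a * P x y + b * Q x y) M = a * expect P M + b * expect Q M.
Proof.
rewrite /expect !big_distrr -big_split; apply: eq_bigr => x _.
by rewrite !big_distrr -big_split; apply: eq_bigr => y _ /=; ring.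
Qed.

Lemma expect_sum (T I : finType) (c : I -> C) (O : I -> op T) (M : op T) :
  expect (fun x y => \sum_(i : I) c i * O i x y) M = \sum_(i : I) c i * expect (O i) M.
Proof.
rewrite /expect; under eq_bigr do under eq_bigr do rewrite big_distrl /=.
under eq_bigr do rewrite exchange_big.
rewrite exchange_big; apply: eq_bigr => i _; rewrite big_distrr; apply: eq_bigr => x _.
by rewrite big_distrr; apply: eq_bigr => y _ /=; ring.
Qed.

Section Clifford.
Variables (T I : finType) (O : I -> op T).
Hypotheses (O_sqr : forall i, mulop (O i) (O i) =2 idop)
           (O_anti : forall i j, i != j -> anticommute (O i) (O j)).

Lemma mulop_clifford_sum (c : I -> C) :
  let B := fun x y => \sum_(i : I) c i * O i x y in
  mulop B B =2 (fun x y => (\sum_(i : I) c i ^+ 2) * idop x y).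
Proof.
move=> B x y.
have -> : mulop B B x y = \sum_(i : I) \sum_(j : I) c i * c j * mulop (O i) (O j) x y.
  rewrite /mulop /B.
  under eq_bigr do rewrite big_distrl /=; under eq_bigr do under eq_bigr do rewrite big_distrr /=.
  rewrite exchange_big; apply: eq_bigr => i _; rewrite exchange_big.
  by apply: eq_bigr => j _; rewrite big_distrr; apply: eq_bigr => z _ /=; ring.
(* symmetrising the double sum leaves only the anticommutators [O i O j + O j O i] *)
have two0 : (2 : C) != 0 by rewrite pnatr_eq0.
apply: (mulIf two0); rewrite mulr_natr mulr2n.
rewrite {2}exchange_big -big_split /= !big_distrl /=; apply: eq_bigr => i _.
rewrite -big_split (bigD1 i) //= big1 ?addr0 => [|j ji].
  by rewrite O_sqr; ring.
by rewrite (O_anti ji) mulrC; ring.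
Qed.

Lemma clifford_expect_bound (tau : op T) :
  psd tau -> trace tau = 1 -> (forall i, herm (O i)) ->
  \sum_(i : I) expect (O i) tau ^+ 2 <= 1.
Proof.
move=> psd_tau tr_tau hO.
pose c i := expect (O i) tau; pose S := \sum_(i : I) c i ^+ 2.
have c_real i : Num.conj (c i) = c i by apply: expect_real.
have S_ge0 : 0 <= S.
  by apply: sumr_ge0 => i _; rewrite -realEsqr; apply/CrealP.
pose B := fun x y => \sum_(i : I) c i * O i x y.
pose A := fun x y => B x y - S * idop x y.
have hA : herm A.
  move=> x y; rewrite /A /B rmorphB rmorphM /= rmorph_sum conj_idop idopC (real_conj S_ge0).
  by congr (_ - _); apply: eq_bigr => i _; rewrite rmorphM /= c_real hO.
have AA : mulop A A =2 (fun x y => (S ^+ 2 + S) * idop x y + (- (2 * S)) * B x y).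
  move=> x y; rewrite /mulop /A.
  transitivity (\sum_(z : T) (B x z * B z y + (- S * B z y) * idop x z
                              + (- S * B x z + S ^+ 2 * idop x z) * idop z y)).
    by apply: eq_bigr => z _; ring.
  rewrite !big_split /= sum_idopl sum_idopr -/(mulop B B x y) mulop_clifford_sum /= -/S; ring.
have S_bound : 0 <= S - S ^+ 2.
  have := expect_sqr_ge0 psd_tau hA; rewrite /expect.
  under eq_bigr do under eq_bigr do rewrite AA.
  rewrite -/(expect _ tau) expect_lin expect_idop tr_tau /B expect_sum.
  rewrite (_ : \sum_i c i * expect (O i) tau = S); last by apply: eq_bigr => i _; rewrite expr2.
  by rewrite (_ : _ * 1 + _ = S - S ^+ 2) //; ring.
change (S <= 1); have [->|S_neq0] := eqVneq S 0; first exact: ler01.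
move: S_bound; rewrite (_ : S - S ^+ 2 = S * (1 - S)); last by ring.
by rewrite pmulr_rge0 ?lt0r ?S_neq0 // subr_ge0.
Qed.

End Clifford.
End CliffordBound.

Section Pauli.
Variable R : rcfType.
Local Notation op := (Defs.op R).
Local Notation idop := (idop R).
Local Notation I := (Id2 R).
Local Notation X := (PauliX R).
Local Notation Y := (PauliY R).
Local Notation Z := (PauliZ R).

Lemma mulop_otens (T U : finType) (P P' : op T) (Q Q' : op U) (x y : T * U) :
  mulop (otens P Q) (otens P' Q') x y = mulop P P' x.1 y.1 * mulop Q Q' x.2 y.2.
Proof.
rewrite /mulop /otens sum_pair big_distrl; apply: eq_bigr => a _.
by rewrite big_distrr; apply: eq_bigr => b _ /=; ring.
Qed.

Lemma herm_otens (T U : finType) (P : op T) (Q : op U) :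
  herm P -> herm Q -> herm (otens P Q).
Proof. by move=> hP hQ x y; rewrite /otens rmorphM /= hP hQ. Qed.

Lemma sqr_otens (T U : finType) (P : op T) (Q : op U) :
  mulop P P =2 idop -> mulop Q Q =2 idop -> mulop (otens P Q) (otens P Q) =2 idop.
Proof. by move=> PP QQ x y; rewrite mulop_otens PP QQ idop_pair. Qed.

Lemma herm_Id2 : herm I.
Proof. by do 2!case; rewrite /Id2 /= ?rmorph1 ?rmorph0. Qed.

Lemma herm_PauliX : herm X.
Proof. by do 2!case; rewrite /PauliX /= ?rmorph1 ?rmorph0. Qed.

Lemma herm_PauliY : herm Y.
Proof.
do 2!case; rewrite /PauliY /= ?rmorph0 //.
all: by apply/eqP; rewrite eq_complex /= ?oppr0 ?opprK !eqxx.
Qed.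

Lemma herm_PauliZ : herm Z.
Proof. by do 2!case; rewrite /PauliZ /= ?rmorphN ?rmorph1 ?rmorph0. Qed.

Ltac pauli_table := do 2!case;
  rewrite /mulop !big_bool /PauliX /PauliY /PauliZ /Id2 /idop /=;
  rewrite ?(mulr0, mul0r, addr0, add0r, mulr1, mul1r, mulrN, mulNr, opprK, oppr0) -?expr2 ?sqr_i;
  rewrite ?(opprK, oppr0) //.

Lemma mulop_Id2l (P : op qubit) : mulop I P =2 P.
Proof. by move=> a b; case: a; rewrite /mulop big_bool /Id2 /= ?mul1r ?mul0r ?addr0 ?add0r. Qed.

Lemma mulop_Id2r (P : op qubit) : mulop P I =2 P.
Proof. by move=> a b; case: b; rewrite /mulop big_bool /Id2 /= ?mulr1 ?mulr0 ?addr0 ?add0r. Qed.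

Lemma sqr_Id2 : mulop I I =2 idop. Proof. pauli_table. Qed.
Lemma sqr_PauliX : mulop X X =2 idop. Proof. pauli_table. Qed.
Lemma sqr_PauliY : mulop Y Y =2 idop. Proof. pauli_table. Qed.
Lemma sqr_PauliZ : mulop Z Z =2 idop. Proof. pauli_table. Qed.
Lemma anticommute_XY : anticommute X Y. Proof. pauli_table. Qed.
Lemma anticommute_XZ : anticommute X Z. Proof. pauli_table. Qed.
Lemma anticommute_YZ : anticommute Y Z. Proof. pauli_table. Qed.

End Pauli.

Section SquareMarginals.
Variable R : rcfType.
Local Notation op := (Defs.op R).
Local Notation idop := (idop R).
Local Notation "P \ot Q" := (otens P Q) (at level 40, left associativity).

Variables A1 A2 B1 B2 C1 C2 D1 D2 : finType.

Definition chainABC (sAB : op (A1 * B1)%type) (mA : op A2) (sBC : op (B2 * C1)%type)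
    (mC : op C2) : op ((A1 * A2) * (B1 * B2) * (C1 * C2))%type :=
  fun x y => sAB (x.1.1.1, x.1.2.1) (y.1.1.1, y.1.2.1) * mA x.1.1.2 y.1.1.2
           * sBC (x.1.2.2, x.2.1) (y.1.2.2, y.2.1) * mC x.2.2 y.2.2.

Definition chainBCD (mB : op B1) (sBC : op (B2 * C1)%type) (sCD : op (C2 * D1)%type)
    (mD : op D2) : op ((B1 * B2) * ((C1 * C2) * (D1 * D2)))%type :=
  fun x y => mB x.1.1 y.1.1 * sBC (x.1.2, x.2.1.1) (y.1.2, y.2.1.1)
           * sCD (x.2.1.2, x.2.2.1) (y.2.1.2, y.2.2.1) * mD x.2.2.2 y.2.2.2.

Definition chainDAB (sAB : op (A1 * B1)%type) (mB : op B2) (mD : op D1)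
    (sDA : op (D2 * A2)%type) : op ((A1 * A2) * (B1 * B2) * (D1 * D2))%type :=
  fun x y => sAB (x.1.1.1, x.1.2.1) (y.1.1.1, y.1.2.1) * mB x.1.2.2 y.1.2.2
           * mD x.2.1 y.2.1 * sDA (x.2.2, x.1.1.2) (y.2.2, y.1.1.2).

Variables (sAB : op (A1 * B1)%type) (sBC : op (B2 * C1)%type)
          (sCD : op (C2 * D1)%type) (sDA : op (D2 * A2)%type).
Local Notation square := (square_sources sAB sBC sCD sDA).

Lemma square_sourcesE : square = relabel
  (fun x : (A1 * A2) * (B1 * B2) * (C1 * C2) * (D1 * D2) =>
     (x.1.1.1.1, x.1.1.2.1, (x.1.1.2.2, x.1.2.1), (x.1.2.2, x.2.1), (x.2.2, x.1.1.1.2)))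
  (sAB \ot sBC \ot sCD \ot sDA).
Proof. by []. Qed.

Lemma psd_square_sources : psd sAB -> psd sBC -> psd sCD -> psd sDA -> psd square.
Proof.
move=> pAB pBC pCD pDA; rewrite square_sourcesE.
apply: (psd_relabel (g := fun z => (z.1.1.1.1, z.2.2, (z.1.1.1.2, z.1.1.2.1), (z.1.1.2.2, z.1.2.1),
                                   (z.1.2.2, z.2.1)))).
- by case=> [[[[? ?] [? ?]] [? ?]] [? ?]].
- by case=> [[[[? ?] [? ?]] [? ?]] [? ?]].
- by do !apply: psd_otens.
Qed.

Lemma trace_square_sources :
  trace sAB = 1 -> trace sBC = 1 -> trace sCD = 1 -> trace sDA = 1 -> trace square = 1.
Proof.
move=> tAB tBC tCD tDA; rewrite square_sourcesE.
rewrite (trace_relabel _ (g := fun z => (z.1.1.1.1, z.2.2, (z.1.1.1.2, z.1.1.2.1), (z.1.1.2.2, z.1.2.1),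
                                        (z.1.2.2, z.2.1)))).
- by rewrite !trace_otens tAB tBC tCD tDA !mulr1.
- by case=> [[[[? ?] [? ?]] [? ?]] [? ?]].
- by case=> [[[[? ?] [? ?]] [? ?]] [? ?]].
Qed.

Lemma ptr2_square : ptr2 square = chainABC sAB (ptr1 sDA) sBC (ptr2 sCD).
Proof.
apply: functional_extensionality => -[[[a1 a2] [b1 b2]] [c1 c2]].
apply: functional_extensionality => -[[[a1' a2'] [b1' b2']] [c1' c2']].
rewrite {1}/ptr2 sum_pair /= (sum_mul_sep
  (K := sAB (a1, b1) (a1', b1') * sBC (b2, c1) (b2', c1'))
  (cf := ptr2 sCD c2 c2') (f := fun d => sCD (c2, d) (c2', d))
  (cg := ptr1 sDA a2 a2') (g := fun d => sDA (d, a2) (d, a2'))) //.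
by rewrite /chainABC /=; ring.
Qed.

Lemma ptr1_square :
  ptr1 (assoc_op (assoc_op square)) = chainBCD (ptr1 sAB) sBC sCD (ptr2 sDA).
Proof.
apply: functional_extensionality => -[[b1 b2] [[c1 c2] [d1 d2]]].
apply: functional_extensionality => -[[b1' b2'] [[c1' c2'] [d1' d2']]].
rewrite {1}/ptr1 sum_pair /= (sum_mul_sep
  (K := sBC (b2, c1) (b2', c1') * sCD (c2, d1) (c2', d1'))
  (cf := ptr1 sAB b1 b1') (f := fun a => sAB (a, b1) (a, b1'))
  (cg := ptr2 sDA d2 d2') (g := fun a => sDA (d2, a) (d2', a))) //.
- by rewrite /chainBCD /=; ring.
- by move=> u v; rewrite /assoc_op /relabel /square_sources /=; ring.
Qed.

Lemma ptrm_square :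
  ptrm (assoc_op square) = chainDAB sAB (ptr2 sBC) (ptr1 sCD) sDA.
Proof.
apply: functional_extensionality => -[[[a1 a2] [b1 b2]] [d1 d2]].
apply: functional_extensionality => -[[[a1' a2'] [b1' b2']] [d1' d2']].
rewrite /ptrm sum_pair /= (sum_mul_sep
  (K := sAB (a1, b1) (a1', b1') * sDA (d2, a2) (d2', a2'))
  (cf := ptr2 sBC b2 b2') (f := fun c => sBC (b2, c) (b2', c))
  (cg := ptr1 sCD d1 d1') (g := fun c => sCD (c, d1) (c, d1'))) //.
- by rewrite /chainDAB /=; ring.
- by move=> u v; rewrite /assoc_op /relabel /square_sources /=; ring.
Qed.

Lemma ptrm_chainABC (mA : op A2) (mC : op C2) :
  ptrm (assoc_op (chainABC sAB mA sBC mC)) = (ptr2 sAB \ot mA) \ot (ptr1 sBC \ot mC).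
Proof.
apply: functional_extensionality => -[[a1 a2] [c1 c2]].
apply: functional_extensionality => -[[a1' a2'] [c1' c2']].
rewrite /ptrm sum_pair /= (sum_mul_sep
  (K := mA a2 a2' * mC c2 c2')
  (cf := ptr2 sAB a1 a1') (f := fun b => sAB (a1, b) (a1', b))
  (cg := ptr1 sBC c1 c1') (g := fun b => sBC (b, c1) (b, c1'))) //.
- by rewrite /otens /=; ring.
- by move=> u v; rewrite /assoc_op /relabel /chainABC /=; ring.
Qed.

Lemma ptrm_chainBCD (mB : op B1) (mD : op D2) :
  ptrm (chainBCD mB sBC sCD mD) = (mB \ot ptr2 sBC) \ot (ptr1 sCD \ot mD).
Proof.
apply: functional_extensionality => -[[b1 b2] [d1 d2]].
apply: functional_extensionality => -[[b1' b2'] [d1' d2']].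
rewrite /ptrm sum_pair /= (sum_mul_sep
  (K := mB b1 b1' * mD d2 d2')
  (cf := ptr2 sBC b2 b2') (f := fun c => sBC (b2, c) (b2', c))
  (cg := ptr1 sCD d1 d1') (g := fun c => sCD (c, d1) (c, d1'))) //.
- by rewrite /otens /=; ring.
- by move=> u v; rewrite /chainBCD /=; ring.
Qed.

Lemma contract_square_idA (gB : op (B1 * B2)%type) (gC : op (C1 * C2)%type)
    (gD : op (D1 * D2)%type) :
  contract square (idop \ot gB \ot gC \ot gD) =
  contract (chainBCD (ptr1 sAB) sBC sCD (ptr2 sDA)) (gB \ot (gC \ot gD)).
Proof. by rewrite !contract_assoc contract_idl ptr1_square. Qed.

Lemma contract_square_idC (gA : op (A1 * A2)%type) (gB : op (B1 * B2)%type)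
    (gD : op (D1 * D2)%type) :
  contract square (gA \ot gB \ot idop \ot gD) =
  contract (chainDAB sAB (ptr2 sBC) (ptr1 sCD) sDA) (gA \ot gB \ot gD).
Proof. by rewrite contract_assoc contract_idm ptrm_square. Qed.

Lemma contract_square_idD (gA : op (A1 * A2)%type) (gB : op (B1 * B2)%type)
    (gC : op (C1 * C2)%type) :
  contract square (gA \ot gB \ot gC \ot idop) =
  contract (chainABC sAB (ptr1 sDA) sBC (ptr2 sCD)) (gA \ot gB \ot gC).
Proof. by rewrite contract_idr ptr2_square. Qed.

Lemma contract_chainABC_idB (mA : op A2) (mC : op C2) (gA : op (A1 * A2)%type)
    (gC : op (C1 * C2)%type) :
  contract (chainABC sAB mA sBC mC) (gA \ot idop \ot gC) =
  contract (ptr2 sAB \ot mA) gA * contract (ptr1 sBC \ot mC) gC.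
Proof. by rewrite contract_assoc contract_idm ptrm_chainABC contract_otens. Qed.

Lemma contract_chainBCD_idC (mB : op B1) (mD : op D2) (gB : op (B1 * B2)%type)
    (gD : op (D1 * D2)%type) :
  contract (chainBCD mB sBC sCD mD) (gB \ot (idop \ot gD)) =
  contract (mB \ot ptr2 sBC) gB * contract (ptr1 sCD \ot mD) gD.
Proof. by rewrite contract_idm ptrm_chainBCD contract_otens. Qed.

End SquareMarginals.

Section Inflation.
Variable R : rcfType.
Local Notation op := (Defs.op R).
Local Notation idop := (idop R).
Local Notation "P \ot Q" := (otens P Q) (at level 40, left associativity).

Variables A1 A2 B1 B2 C1 C2 D1 D2 : finType.
Variables (rAB : op (A1 * B1)%type) (rBC : op (B2 * C1)%type)
          (rCD : op (C2 * D1)%type) (rDA : op (D2 * A2)%type).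
Hypotheses (trAB : trace rAB = 1) (trBC : trace rBC = 1)
           (trCD : trace rCD = 1) (trDA : trace rDA = 1).
Local Notation square := (square_sources rAB rBC rCD rDA).

Definition swapDA (x : (A1 * A2) * (B1 * B2) * (C1 * C2) * (D1 * D2) * (D1 * D2)) :=
  (x.1.1, (x.1.2.1, x.2.2), (x.2.1, x.1.2.2)).

(* Two copies D, D' of party D: D keeps its CD input and D' its DA input, the
   other inputs being fresh copies of the corresponding marginals. *)
Definition inflD2 := relabel swapDA (square \ot (ptr1 rCD \ot ptr2 rDA)).
Definition inflD3 := inflD2 \ot (ptr1 rCD \ot ptr2 rDA).
Definition inflC2 := square \ot (ptr1 rBC \ot ptr2 rCD).

Section States.
Hypotheses (psdAB : psd rAB) (psdBC : psd rBC) (psdCD : psd rCD) (psdDA : psd rDA).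

Lemma swapDAK : involutive swapDA.
Proof. by case=> [[? [? ?]] [? ?]]. Qed.

Lemma psd_inflD3 : psd inflD3.
Proof.
have psd_marg (T U V W : finType) (P : op (T * U)%type) (Q : op (V * W)%type) :
    psd P -> psd Q -> psd (ptr1 P \ot ptr2 Q).
  by move=> pP pQ; apply: psd_otens; [apply: psd_ptr1 | apply: psd_ptr2].
apply: psd_otens (psd_marg _ _ _ _ _ _ psdCD psdDA).
apply: (psd_relabel swapDAK swapDAK); apply: psd_otens (psd_marg _ _ _ _ _ _ psdCD psdDA).
exact: psd_square_sources.
Qed.

Lemma psd_inflC2 : psd inflC2.
Proof.
apply: psd_otens; first exact: psd_square_sources.
by apply: psd_otens; [apply: psd_ptr1 | apply: psd_ptr2].
Qed.

End States.

Lemma trace_inflD3 : trace inflD3 = 1.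
Proof.
rewrite !trace_otens (trace_relabel _ swapDAK swapDAK) trace_otens trace_square_sources //.
by rewrite trace_otens trace_ptr1 trace_ptr2 trCD trDA !mulr1.
Qed.

Lemma trace_inflC2 : trace inflC2 = 1.
Proof.
by rewrite trace_otens trace_square_sources // trace_otens trace_ptr1 trace_ptr2 trBC trCD !mulr1.
Qed.

Lemma ptr2_inflD2 : ptr2 inflD2 = square_sources rAB rBC rCD (ptr2 rDA \ot ptr1 rDA).
Proof.
apply: functional_extensionality => -[[[[a1 a2] [b1 b2]] [c1 c2]] [d1 d2]].
apply: functional_extensionality => -[[[[a1' a2'] [b1' b2']] [c1' c2']] [d1' d2']].
rewrite {1}/ptr2 sum_pair /= (sum_mul_sep
  (K := rAB (a1, b1) (a1', b1') * rBC (b2, c1) (b2', c1') * rCD (c2, d1) (c2', d1')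
        * ptr2 rDA d2 d2')
  (cf := 1) (f := fun d => ptr1 rCD d d)
  (cg := ptr1 rDA a2 a2') (g := fun d => rDA (d, a2) (d, a2'))) //.
- by rewrite /square_sources /otens /=; ring.
- by move=> u v; rewrite /inflD2 /relabel /swapDA /otens /square_sources /=; ring.
- by rewrite -/(trace _) trace_ptr1.
Qed.

Lemma ptrm_inflD2 :
  ptrm (assoc_op inflD2) = square_sources rAB rBC (ptr2 rCD \ot ptr1 rCD) rDA.
Proof.
apply: functional_extensionality => -[[[[a1 a2] [b1 b2]] [c1 c2]] [d1 d2]].
apply: functional_extensionality => -[[[[a1' a2'] [b1' b2']] [c1' c2']] [d1' d2']].
rewrite /ptrm sum_pair /= (sum_mul_sep
  (K := rAB (a1, b1) (a1', b1') * rBC (b2, c1) (b2', c1') * rDA (d2, a2) (d2', a2')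
        * ptr1 rCD d1 d1')
  (cf := ptr2 rCD c2 c2') (f := fun d => rCD (c2, d) (c2', d))
  (cg := 1) (g := fun d => ptr2 rDA d d)) //.
- by rewrite /square_sources /otens /=; ring.
- by move=> u v; rewrite /assoc_op /inflD2 /relabel /swapDA /otens /square_sources /=; ring.
- by rewrite -/(trace _) trace_ptr2.
Qed.

Lemma contract_inflD3_BCD (gB : op (B1 * B2)%type) (gC : op (C1 * C2)%type)
    (gD : op (D1 * D2)%type) :
  contract inflD3 (idop \ot gB \ot gC \ot gD \ot idop \ot idop) =
  contract square (idop \ot gB \ot gC \ot gD).
Proof.
rewrite contract_idr ptr2_otens ?trace_otens ?trace_ptr1 ?trace_ptr2 ?trCD ?trDA ?mulr1 //.
by rewrite contract_idr ptr2_inflD2 !contract_square_idA ptr2_otens // trace_ptr1.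
Qed.

Lemma contract_inflD3_BD (gB : op (B1 * B2)%type) (gD : op (D1 * D2)%type) :
  contract inflD3 (idop \ot gB \ot idop \ot idop \ot idop \ot gD) =
  contract square (idop \ot gB \ot idop \ot gD).
Proof.
rewrite contract_otens contract_idr ptr2_inflD2 !contract_square_idA !contract_chainBCD_idC.
rewrite ptr2_otens ?trace_ptr1 // contract_idop trace_otens trace_ptr1 trace_ptr2 trCD trDA.
by rewrite !mulr1.
Qed.

Lemma contract_inflD3_ABD (gA : op (A1 * A2)%type) (gB : op (B1 * B2)%type)
    (gD : op (D1 * D2)%type) :
  contract inflD3 (gA \ot gB \ot idop \ot idop \ot gD \ot idop) =
  contract square (gA \ot gB \ot idop \ot gD).
Proof.
rewrite contract_idr ptr2_otens ?trace_otens ?trace_ptr1 ?trace_ptr2 ?trCD ?trDA ?mulr1 //.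
rewrite contract_assoc contract_idm ptrm_inflD2 !contract_square_idC.
by rewrite ptr1_otens // trace_ptr2.
Qed.

Lemma contract_inflC2_AC (gA : op (A1 * A2)%type) (gC : op (C1 * C2)%type) :
  contract inflC2 (gA \ot idop \ot idop \ot idop \ot gC) =
  contract square (gA \ot idop \ot gC \ot idop).
Proof.
rewrite contract_otens !contract_square_idD !contract_chainABC_idB.
by rewrite contract_idop trace_otens trace_ptr1 trace_ptr2 trBC trCD !mulr1.
Qed.

Lemma contract_inflC2_ABCD (gA : op (A1 * A2)%type) (gB : op (B1 * B2)%type)
    (gC : op (C1 * C2)%type) (gD : op (D1 * D2)%type) :
  contract inflC2 (gA \ot gB \ot gC \ot gD \ot idop) = contract square (gA \ot gB \ot gC \ot gD).
Proof.
by rewrite contract_idr ptr2_otens // trace_otens trace_ptr1 trace_ptr2 trBC trCD mulr1.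
Qed.

End Inflation.

Section Observables.
Variable R : rcfType.
Local Notation op := (Defs.op R).
Local Notation I := (Id2 R).
Local Notation X := (PauliX R).
Local Notation Y := (PauliY R).
Local Notation Z := (PauliZ R).
Local Notation "P \ot Q" := (otens P Q) (at level 40, left associativity).

Definition obsD3 (i : 'I_3) : op (qubit * qubit * qubit * qubit * qubit * qubit)%type :=
  nth (I \ot X \ot I \ot I \ot I \ot X)
    [:: I \ot X \ot I \ot I \ot I \ot X; I \ot Z \ot X \ot Z \ot I \ot I;
        X \ot Y \ot I \ot I \ot Y \ot I] i.

Definition obsC2 (i : 'I_2) : op (qubit * qubit * qubit * qubit * qubit)%type :=
  nth (X \ot I \ot I \ot I \ot X) [:: X \ot I \ot I \ot I \ot X; Y \ot Y \ot Z \ot Z \ot I] i.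

Ltac pauli_herm := do !apply: herm_otens;
  first [exact: herm_Id2 | exact: herm_PauliX | exact: herm_PauliY | exact: herm_PauliZ].
Ltac pauli_sqr := do !apply: sqr_otens;
  first [exact: sqr_Id2 | exact: sqr_PauliX | exact: sqr_PauliY | exact: sqr_PauliZ].
(* the two tensor products anticommute at exactly one site and commute at all others *)
Ltac pauli_anti := move=> ? ?;
  rewrite !mulop_otens ?mulop_Id2l ?mulop_Id2r ?anticommute_XY ?anticommute_XZ ?anticommute_YZ;
  ring.

Lemma herm_obsD3 i : herm (obsD3 i).
Proof. by case: i => [[|[|[|//]]] ?]; rewrite /obsD3 /=; pauli_herm. Qed.

Lemma sqr_obsD3 i : mulop (obsD3 i) (obsD3 i) =2 idop R.
Proof. by case: i => [[|[|[|//]]] ?]; rewrite /obsD3 /=; pauli_sqr. Qed.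

Lemma anticommute_obsD3 i j : i != j -> anticommute (obsD3 i) (obsD3 j).
Proof.
by case: i => [[|[|[|//]]] ?]; case: j => [[|[|[|//]]] ?] //= _; rewrite /obsD3 /=; pauli_anti.
Qed.

Lemma herm_obsC2 i : herm (obsC2 i).
Proof. by case: i => [[|[|//]] ?]; rewrite /obsC2 /=; pauli_herm. Qed.

Lemma sqr_obsC2 i : mulop (obsC2 i) (obsC2 i) =2 idop R.
Proof. by case: i => [[|[|//]] ?]; rewrite /obsC2 /=; pauli_sqr. Qed.

Lemma anticommute_obsC2 i j : i != j -> anticommute (obsC2 i) (obsC2 j).
Proof. by case: i => [[|[|//]] ?]; case: j => [[|[|//]] ?] //= _; rewrite /obsC2 /=; pauli_anti. Qed.

End Observables.

Section SquareNetworkBounds.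
Variable R : rcfType.
Local Notation op := (Defs.op R).
Local Notation idop := (idop R).
Local Notation I := (Id2 R).
Local Notation X := (PauliX R).
Local Notation Y := (PauliY R).
Local Notation Z := (PauliZ R).
Local Notation "P \ot Q" := (otens P Q) (at level 40, left associativity).
Local Notation "E \otc F" := (tens2 E F) (at level 40, left associativity).

Lemma pauli4E (PA PB PC PD : op qubit) : pauli4 PA PB PC PD = PA \ot PB \ot PC \ot PD.
Proof. by []. Qed.

Lemma heis_Id2 (T : finType) (E : op T -> op qubit) : channel E -> heis I E = idop.
Proof. exact: heis_idop. Qed.

Variables A1 A2 B1 B2 C1 C2 D1 D2 : finType.
Variables (rAB : op (A1 * B1)%type) (rBC : op (B2 * C1)%type)
          (rCD : op (C2 * D1)%type) (rDA : op (D2 * A2)%type).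
Hypotheses (dAB : density rAB) (dBC : density rBC) (dCD : density rCD) (dDA : density rDA).
Variables (L : finType) (p : L -> R).
Variables (EA : L -> op (A1 * A2)%type -> op qubit) (EB : L -> op (B1 * B2)%type -> op qubit)
          (EC : L -> op (C1 * C2)%type -> op qubit) (ED : L -> op (D1 * D2)%type -> op qubit).
Hypotheses (p_ge0 : forall l, 0 <= p l) (p_sum : \sum_(l : L) p l = 1)
           (chan : forall l, [/\ channel (EA l), channel (EB l), channel (EC l) & channel (ED l)]).

Local Notation square := (square_sources rAB rBC rCD rDA).
Local Notation rho := (mixture p (fun l => tens4 (EA l) (EB l) (EC l) (ED l) square)).

Definition tauD3 := mixture p (fun l =>
  (EA l \otc EB l \otc EC l \otc ED l \otc ED l \otc ED l) (inflD3 rAB rBC rCD rDA)).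
Definition tauC2 := mixture p (fun l =>
  (EA l \otc EB l \otc EC l \otc ED l \otc EC l) (inflC2 rAB rBC rCD rDA)).

Lemma density_tauD3 : density tauD3.
Proof.
case: dAB dBC dCD dDA => [? ?] [? ?] [? ?] [? ?].
apply: (density_mixture (F := fun l => EA l \otc EB l \otc EC l \otc ED l \otc ED l \otc ED l)
  p_ge0 p_sum) => [l|].
  by case: (chan l) => *; do !apply: channel_tens2.
by split; [apply: psd_inflD3 | apply: trace_inflD3].
Qed.

Lemma density_tauC2 : density tauC2.
Proof.
case: dAB dBC dCD dDA => [? ?] [? ?] [? ?] [? ?].
apply: (density_mixture (F := fun l => EA l \otc EB l \otc EC l \otc ED l \otc EC l)
  p_ge0 p_sum) => [l|].
  by case: (chan l) => *; do !apply: channel_tens2.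
by split; [apply: psd_inflC2 | apply: trace_inflC2].
Qed.

Lemma expect_rho (OA OB OC OD : op qubit) :
  expect (pauli4 OA OB OC OD) rho = \sum_(l : L) Complex (p l) 0 *
    contract square (heis OA (EA l) \ot heis OB (EB l) \ot heis OC (EC l) \ot heis OD (ED l)).
Proof.
rewrite expect_mixture; apply: eq_bigr => l _.
by rewrite pauli4E tens4_tens2 !expect_tens2 !heis_tens2.
Qed.

Lemma expect_tauD3 (OA OB OC OD OD' OD'' : op qubit) :
  expect (OA \ot OB \ot OC \ot OD \ot OD' \ot OD'') tauD3 = \sum_(l : L) Complex (p l) 0 *
    contract (inflD3 rAB rBC rCD rDA) (heis OA (EA l) \ot heis OB (EB l) \ot heis OC (EC l)
      \ot heis OD (ED l) \ot heis OD' (ED l) \ot heis OD'' (ED l)).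
Proof. by rewrite expect_mixture; apply: eq_bigr => l _; rewrite !expect_tens2 !heis_tens2. Qed.

Lemma expect_tauC2 (OA OB OC OD OC' : op qubit) :
  expect (OA \ot OB \ot OC \ot OD \ot OC') tauC2 = \sum_(l : L) Complex (p l) 0 *
    contract (inflC2 rAB rBC rCD rDA) (heis OA (EA l) \ot heis OB (EB l) \ot heis OC (EC l)
      \ot heis OD (ED l) \ot heis OC' (EC l)).
Proof. by rewrite expect_mixture; apply: eq_bigr => l _; rewrite !expect_tens2 !heis_tens2. Qed.

Section TraceOne.
Hypotheses (trAB : trace rAB = 1) (trBC : trace rBC = 1)
           (trCD : trace rCD = 1) (trDA : trace rDA = 1).

Lemma expect_tauD3_BD (OB OD : op qubit) :
  expect (I \ot OB \ot I \ot I \ot I \ot OD) tauD3 = expect (pauli4 I OB I OD) rho.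
Proof.
rewrite expect_tauD3 expect_rho; apply: eq_bigr => l _; case: (chan l) => *.
by rewrite !heis_Id2 // contract_inflD3_BD.
Qed.

Lemma expect_tauD3_BCD (OB OC OD : op qubit) :
  expect (I \ot OB \ot OC \ot OD \ot I \ot I) tauD3 = expect (pauli4 I OB OC OD) rho.
Proof.
rewrite expect_tauD3 expect_rho; apply: eq_bigr => l _; case: (chan l) => *.
by rewrite !heis_Id2 // contract_inflD3_BCD.
Qed.

Lemma expect_tauD3_ABD (OA OB OD : op qubit) :
  expect (OA \ot OB \ot I \ot I \ot OD \ot I) tauD3 = expect (pauli4 OA OB I OD) rho.
Proof.
rewrite expect_tauD3 expect_rho; apply: eq_bigr => l _; case: (chan l) => *.
by rewrite !heis_Id2 // contract_inflD3_ABD.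
Qed.

Lemma expect_tauC2_AC (OA OC : op qubit) :
  expect (OA \ot I \ot I \ot I \ot OC) tauC2 = expect (pauli4 OA I OC I) rho.
Proof.
rewrite expect_tauC2 expect_rho; apply: eq_bigr => l _; case: (chan l) => *.
by rewrite !heis_Id2 // contract_inflC2_AC.
Qed.

Lemma expect_tauC2_ABCD (OA OB OC OD : op qubit) :
  expect (OA \ot OB \ot OC \ot OD \ot I) tauC2 = expect (pauli4 OA OB OC OD) rho.
Proof.
rewrite expect_tauC2 expect_rho; apply: eq_bigr => l _; case: (chan l) => *.
by rewrite !heis_Id2 // contract_inflC2_ABCD.
Qed.

End TraceOne.

Lemma square_bound_D3 :
  expect (pauli4 I X I X) rho ^+ 2 + expect (pauli4 I Z X Z) rho ^+ 2
  + expect (pauli4 X Y I Y) rho ^+ 2 <= 1.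
Proof.
have [psd_tau tr_tau] := density_tauD3.
have := clifford_expect_bound (@sqr_obsD3 R) (@anticommute_obsD3 R) psd_tau tr_tau (@herm_obsD3 R).
case: dAB dBC dCD dDA => [_ ?] [_ ?] [_ ?] [_ ?].
rewrite !big_ord_recl big_ord0 addr0 addrA /obsD3 /=.
by rewrite expect_tauD3_BD // expect_tauD3_BCD // expect_tauD3_ABD.
Qed.

Lemma square_bound_C2 :
  expect (pauli4 X I X I) rho ^+ 2 + expect (pauli4 Y Y Z Z) rho ^+ 2 <= 1.
Proof.
have [psd_tau tr_tau] := density_tauC2.
have := clifford_expect_bound (@sqr_obsC2 R) (@anticommute_obsC2 R) psd_tau tr_tau (@herm_obsC2 R).
case: dAB dBC dCD dDA => [_ ?] [_ ?] [_ ?] [_ ?].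
rewrite !big_ord_recl big_ord0 addr0 /obsC2 /=.
by rewrite expect_tauC2_AC // expect_tauC2_ABCD.
Qed.

End SquareNetworkBounds.

Theorem mainTheorem8 (R : rcfType) (rho : op R (qubit * qubit * qubit * qubit)%type) :
  square_network_state rho ->
  (expect (pauli4 (Id2 R) (PauliX R) (Id2 R) (PauliX R)) rho ^+ 2
   + expect (pauli4 (Id2 R) (PauliZ R) (PauliX R) (PauliZ R)) rho ^+ 2
   + expect (pauli4 (PauliX R) (PauliY R) (Id2 R) (PauliY R)) rho ^+ 2 <= 1)
  /\
  (expect (pauli4 (PauliX R) (Id2 R) (PauliX R) (Id2 R)) rho ^+ 2
   + expect (pauli4 (PauliY R) (PauliY R) (PauliZ R) (PauliZ R)) rho ^+ 2 <= 1).
Proof.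
case=> A1 [A2 [B1 [B2 [C1 [C2 [D1 [D2 [rAB [rBC [rCD [rDA [L [p [EA [EB [EC [ED
  [[dAB dBC dCD dDA] [p_ge0 p_sum] chan ->]]]]]]]]]]]]]]]]]].
split; [exact: square_bound_D3 | exact: square_bound_C2].
Qed.
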